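(* Let $D$ be a digraph with $\chi(D)>\omega$. Then both $\vec H_{\omega,\omega}$ and $\overleftarrow{H}_{\omega,\omega}$ embed into $D$ (as not necessarily induced subdigraphs).
   Context: A digraph is a pair $D=(V,E)$ with $E\subseteq V^2$ such that $uv\in E$ implies $vu\notin E$. The dichromatic number $\chi(D)$ is the minimal number of acyclic vertex sets (sets inducing no directed cycle) covering $V(D)$. $\vec H_{\omega,\omega}$ is the digraph on $\omega\times 2$ whose arcs are $(k,0)(\ell,1)$ for all $k\leq\ell<\omega$; $\overleftarrow{H}_{\omega,\omega}$ is the digraph on $\omega\times2$ whose arcs are $(\ell,1)(k,0)$ for all $k\leq\ell<\omega$. *)

From Stdlib Require Import List.
Import ListNotations.

Definition oriented {V : Type} (E : V -> V -> Prop) : Prop :=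
  forall u v, E u v -> ~ E v u.

Fixpoint path_arcs {V : Type} (E : V -> V -> Prop) (x : V) (l : list V) : Prop :=
  match l with
  | [] => True
  | y :: l' => E x y /\ path_arcs E y l'
  end.

Definition directed_cycle {V : Type} (E : V -> V -> Prop) (l : list V) : Prop :=
  exists v0 rest, l = v0 :: rest /\ rest <> [] /\ NoDup l /\
    path_arcs E v0 (rest ++ [v0]).

Definition acyclic_set {V : Type} (E : V -> V -> Prop) (A : V -> Prop) : Prop :=
  ~ exists l, directed_cycle E l /\ forall v, In v l -> A v.

Definition dichromatic_le_omega {V : Type} (E : V -> V -> Prop) : Prop :=
  exists A : nat -> V -> Prop,
    (forall n, acyclic_set E (A n)) /\ forall v, exists n, A n v.

Definition dichromatic_gt_omega {V : Type} (E : V -> V -> Prop) : Prop :=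
  ~ dichromatic_le_omega E.

(* Vertex set omega x 2, with (k,false) = (k,0) and (k,true) = (k,1). *)
Definition H_fwd (x y : nat * bool) : Prop :=
  snd x = false /\ snd y = true /\ fst x <= fst y.

Definition H_bwd (x y : nat * bool) : Prop :=
  snd x = true /\ snd y = false /\ fst y <= fst x.

Definition embeds {W V : Type} (H : W -> W -> Prop) (E : V -> V -> Prop) : Prop :=
  exists f : W -> V, (forall x y, f x = f y -> x = y) /\
    (forall x y, H x y -> E (f x) (f y)).

(* Suppose H_fwd does not embed.  Call C closed if, whenever a nonempty finite
   F included in C has only finitely many common out-neighbours, all of them lie
   in C.  Then a vertex y outside a closed C has only finitely many in-neighbours
   in C: otherwise every finite set of them has infinitely many common
   out-neighbours (y among them, and C is closed), and a greedy choice builds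
   a copy of H_fwd.  Closure does not increase the size of an infinite set, so
   a set Y of size kappa is an increasing union of closed sets of smaller size.
   Ranking each vertex by the first of these sets containing it, colour each
   layer with countably many colours (induction on kappa) and refine by a greedy
   colour avoiding the finitely many in-neighbours of smaller rank: a
   monochromatic directed cycle cannot climb in rank, so it stays in one layer.
   Sizes are measured by injections into finite binary trees whose leaves lie
   below an element of a well-order.  H_bwd is H_fwd for the reversed digraph. *)

From Stdlib Require Import List Arith Lia Classical ClassicalEpsilon FunctionalExtensionality Wellfounded Cantor Permutation.
From mathcomp Require ssreflect ssrbool eqtype boolp wochoice.
Import ListNotations.

(** * Well-orders *)

Definition strict_well_order {O : Type} (lt : O -> O -> Prop) : Prop :=
  well_founded lt /\ (forall x y z, lt x y -> lt y z -> lt x z) /\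
  (forall x y, lt x y \/ x = y \/ lt y x).

Module WellOrdering.
Import ssreflect ssrbool eqtype boolp wochoice.

Lemma well_order_exists (T : Type) : exists R : T -> T -> Prop,
  (forall x y, R x y -> R y x -> x = y) /\
  forall A : T -> Prop, (exists x, A x) -> exists z, A z /\ forall y, A y -> R z y.
Proof.
have [R Rwo] := well_ordering_principle {classic T}.
exists (fun x y => R x y); split.
- move=> x y Rxy Ryx.
  have anti := @wo_chain_antisymmetric {classic T} R predT (fun A _ => Rwo A).
  by apply: (anti x y) => //; rewrite Rxy Ryx.
- move=> A [x Ax].
  have ne : nonempty [pred y : {classic T} | `[< A y >]].
    by exists x; rewrite inE; apply/asboolP.
  have [z [[zA lb] _]] := Rwo _ ne.
  exists z; split; first by move: zA; rewrite inE => /asboolP.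
  by move=> y Ay; apply: lb; rewrite inE; apply/asboolP.
Qed.

End WellOrdering.

Lemma strict_well_order_exists (T : Type) : exists lt : T -> T -> Prop, strict_well_order lt.
Proof.
  destruct (WellOrdering.well_order_exists T) as [R [Ranti Rmin]].
  exists (fun x y => R x y /\ x <> y).
  assert (Rmin2 : forall x y, R x y \/ R y x).
  { intros x y. destruct (Rmin (fun w => w = x \/ w = y)) as [m [[-> | ->] Hm]]; [eauto| |].
    - left; apply Hm; auto.
    - right; apply Hm; auto. }
  split; [|split].
  - intro x. apply NNPP; intro Hx.
    destruct (Rmin (fun v => ~ Acc (fun x y => R x y /\ x <> y) v)) as [z [Hz Hmin]]; [exists x; exact Hx|].
    apply Hz. constructor. intros y [Ryz Hyz]. apply NNPP; intro Hy.
    apply Hyz, Ranti; auto.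
  - intros x y z [Rxy nxy] [Ryz nyz].
    destruct (Rmin (fun w => w = x \/ w = y \/ w = z)) as [m [Hm Hmin]]; [exists x; left; reflexivity|].
    destruct Hm as [-> | [-> | ->]].
    + split; [apply Hmin; auto|]. intros ->. apply nxy, Ranti; auto.
    + destruct nxy; apply Ranti; auto.
    + destruct nyz; apply Ranti; auto.
  - intros x y. destruct (classic (x = y)) as [e|ne]; [auto|].
    destruct (Rmin2 x y); [left|right; right]; split; auto.
Qed.

Definition lt_top {O : Type} (lt : O -> O -> Prop) (a b : option O) : Prop :=
  match a, b with
  | Some x, Some y => lt x y
  | Some _, None => True
  | None, _ => False
  end.

Lemma strict_well_order_lt_top {O : Type} (lt : O -> O -> Prop) :
  strict_well_order lt -> strict_well_order (lt_top lt).
Proof.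
  intros [wf [trans tot]].
  assert (Hsome : forall x, Acc (lt_top lt) (Some x)).
  { intro x. induction (wf x) as [x _ IH].
    constructor. intros [y|] h; [apply IH, h|destruct h]. }
  split; [|split].
  - intros [x|]; [apply Hsome|]. constructor. intros [y|] h; [apply Hsome|destruct h].
  - intros [x|] [y|] [z|]; simpl; eauto; contradiction.
  - intros [x|] [y|]; simpl; auto. destruct (tot x y) as [h|[->|h]]; auto.
Qed.

Section StrictWellOrder.

Variables (O : Type) (lt : O -> O -> Prop).
Hypothesis lt_swo : strict_well_order lt.

Let lt_wf : well_founded lt := proj1 lt_swo.
Let lt_trans := proj1 (proj2 lt_swo).
Let lt_total := proj2 (proj2 lt_swo).

Lemma lt_irrefl x : ~ lt x x.
Proof. induction (lt_wf x) as [x _ IH]. intro h. exact (IH x h h). Qed.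

Lemma exists_minimal (A : O -> Prop) :
  (exists x, A x) -> exists z, A z /\ forall y, lt y z -> ~ A y.
Proof.
  intros [x Ax]. apply NNPP; intro Hn. revert Ax.
  induction (lt_wf x) as [x _ IH]. intro Ax.
  apply Hn. exists x. split; [exact Ax|]. intros y Hy Ay. exact (IH y Hy Ay).
Qed.

Lemma exists_max_in_list {V : Type} (rank : V -> O) (l : list V) :
  l <> [] -> exists x, In x l /\ forall v, In v l -> ~ lt (rank x) (rank v).
Proof.
  induction l as [|a l IH]; intro Hne; [congruence|].
  destruct l as [|b l].
  - exists a. split; [left; auto|]. intros v [<-|[]]. apply lt_irrefl.
  - destruct (IH ltac:(discriminate)) as [x [Hx Hmax]].
    destruct (lt_total (rank x) (rank a)) as [h|[h|h]].
    + exists a. split; [left; auto|]. intros v [<-|Hv]; [apply lt_irrefl|].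
      intro h'. apply (Hmax v Hv). eauto.
    + exists x. split; [right; auto|]. intros v [<-|Hv]; [rewrite h; apply lt_irrefl|auto].
    + exists x. split; [right; auto|]. intros v [<-|Hv]; [|auto].
      intro h'. apply (lt_irrefl (rank x)). eauto.
Qed.

Definition monotone (P : O -> Prop) : Prop := forall b b', lt b b' -> P b -> P b'.

Lemma monotone_join (P Q : O -> Prop) b c :
  monotone P -> monotone Q -> P b -> Q c -> exists d, (d = b \/ d = c) /\ P d /\ Q d.
Proof.
  intros HP HQ Pb Qc. destruct (lt_total b c) as [h|[<-|h]].
  - exists c. split; [right|split]; eauto.
  - exists b. auto.
  - exists b. split; [left|split]; eauto.
Qed.

Lemma monotone_family_bound {A : Type} (M : O -> A -> Prop) (beta : O) :
  (forall a, monotone (fun b => M b a)) ->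
  forall F, F <> [] -> (forall a, In a F -> exists b, lt b beta /\ M b a) ->
  exists b, lt b beta /\ forall a, In a F -> M b a.
Proof.
  intros HM. induction F as [|a F IH]; intros Hne HF; [congruence|].
  destruct (HF a (or_introl eq_refl)) as [ba [Hba Ma]].
  destruct F as [|a' F].
  - exists ba. split; auto. intros f [<-|[]]; auto.
  - destruct IH as [bF [HbF HF']]; [discriminate|intros; apply HF; right; auto|].
    destruct (monotone_join (fun b => forall f, In f (a' :: F) -> M b f) (fun b => M b a) bF ba)
      as [d [Hd [HdF Hda]]]; auto.
    + intros b b' h H f Hf. apply (HM f b b'); auto.
    + exists d. split; [destruct Hd as [-> | ->]; auto|]. intros f [<-|Hf]; auto.
Qed.

End StrictWellOrder.

(** * Copies of H from rich sets *)

Definition finite_set {V : Type} (P : V -> Prop) : Prop :=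
  exists L : list V, forall x, P x -> In x L.

Lemma finite_set_sub {V : Type} (P Q : V -> Prop) :
  finite_set Q -> (forall x, P x -> Q x) -> finite_set P.
Proof. intros [L HL] HPQ. exists L. auto. Qed.

Lemma not_finite_fresh {V : Type} (P : V -> Prop) :
  ~ finite_set P -> forall L, exists x, P x /\ ~ In x L.
Proof.
  intros HP L. apply NNPP; intro H. apply HP. exists L.
  intros x Px. apply NNPP; intro Hx. apply H. eauto.
Qed.

Definition common_out {V : Type} (E : V -> V -> Prop) (F : list V) (v : V) : Prop :=
  forall f, In f F -> E f v.

Fixpoint choice_history {T : Type} (next : list T -> T) (n : nat) : list T :=
  match n with
  | 0 => []
  | S n => choice_history next n ++ [next (choice_history next n)]
  end.

Lemma dependent_choice_list {T : Type} (Inv : list T -> Prop) (R : list T -> T -> Prop) :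
  Inv [] -> (forall h, Inv h -> exists t, R h t /\ Inv (h ++ [t])) ->
  exists p : nat -> T, forall n, R (map p (seq 0 n)) (p n).
Proof.
  intros Inv0 Hstep.
  destruct (Hstep [] Inv0) as [t0 _].
  set (next := fun h => epsilon (inhabits t0) (fun t => R h t /\ Inv (h ++ [t]))).
  assert (Hnext : forall h, Inv h -> R h (next h) /\ Inv (h ++ [next h])).
  { intros h Hh. apply (epsilon_spec (inhabits t0) (fun t => R h t /\ Inv (h ++ [t]))), Hstep, Hh. }
  set (p := fun n => next (choice_history next n)).
  assert (Hhist : forall n, choice_history next n = map p (seq 0 n) /\ Inv (choice_history next n)).
  { induction n as [|n [Hmap Hinv]]; [split; auto|].
    cbn [choice_history]. rewrite seq_S, map_app, <- Hmap. split; [reflexivity|apply Hnext, Hinv]. }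
  exists p. intro n. destruct (Hhist n) as [<- Hinv]. apply Hnext, Hinv.
Qed.

Lemma embeds_H_fwd_of_rich {V : Type} (E : V -> V -> Prop) (A : V -> Prop) :
  ~ finite_set A ->
  (forall F, F <> [] -> (forall f, In f F -> A f) -> ~ finite_set (common_out E F)) ->
  embeds H_fwd E.
Proof.
  intros HA Hrich.
  set (chosen := fun h : list (V * V) => map fst h ++ map snd h).
  destruct (dependent_choice_list (fun h => forall t, In t h -> A (fst t))
      (fun h t => ~ In (fst t) (chosen h) /\ ~ In (snd t) (fst t :: chosen h) /\
                  common_out E (fst t :: map fst h) (snd t))) as [p Hp].
  { intros t []. }
  { intros h Hh. destruct (not_finite_fresh A HA (chosen h)) as [a [Aa Ha]].
    assert (HF : forall f, In f (a :: map fst h) -> A f).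
    { intros f [<-|Hf]; [exact Aa|]. apply in_map_iff in Hf as [t [<- Ht]]. auto. }
    destruct (not_finite_fresh _ (Hrich (a :: map fst h) ltac:(discriminate) HF) (a :: chosen h)) as [b [Hb Hb']].
    exists (a, b). split; [auto|]. intros t Ht. apply in_app_or in Ht as [Ht|[<-|[]]]; auto. }
  assert (Hearlier : forall j k, j < k ->
            In (fst (p j)) (chosen (map p (seq 0 k))) /\ In (snd (p j)) (chosen (map p (seq 0 k)))).
  { intros j k Hjk. assert (Hj : In (p j) (map p (seq 0 k))) by (apply in_map, in_seq; lia).
    split; apply in_or_app; [left|right]; apply in_map, Hj. }
  assert (Hfresh : forall j k, j < k ->
            fst (p k) <> fst (p j) /\ fst (p k) <> snd (p j) /\
            snd (p k) <> fst (p j) /\ snd (p k) <> snd (p j)).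
  { intros j k Hjk. destruct (Hp k) as [Hak [Hbk _]]. destruct (Hearlier j k Hjk) as [Haj Hbj].
    repeat split; intro e; rewrite e in *; [apply Hak|apply Hak|apply Hbk; right|apply Hbk; right]; assumption. }
  exists (fun x : nat * bool => if snd x then snd (p (fst x)) else fst (p (fst x))). split.
  - intros [j bj] [k bk]. simpl.
    destruct (lt_eq_lt_dec j k) as [[Hjk| <-]|Hkj].
    + destruct (Hfresh j k Hjk) as [? [? [? ?]]]. destruct bj, bk; intro e; congruence.
    + destruct (Hp j) as [_ [Hbj _]].
      destruct bj, bk; intro e; auto; destruct Hbj; left; congruence.
    + destruct (Hfresh k j Hkj) as [? [? [? ?]]]. destruct bj, bk; intro e; congruence.
  - intros [j bj] [k bk] [Hj [Hk Hjk]]. simpl in *. subst.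
    destruct (Hp k) as [_ [_ Hout]]. apply Hout.
    destruct (Nat.eq_dec j k) as [-> | ne]; [left; reflexivity|].
    right. apply in_map, in_map, in_seq. lia.
Qed.

(** * Closed sets *)

Definition generates {V : Type} (E : V -> V -> Prop) (C : V -> Prop) (F : list V) (v : V) : Prop :=
  F <> [] /\ (forall f, In f F -> C f) /\ finite_set (common_out E F) /\ common_out E F v.

Definition closed_set {V : Type} (E : V -> V -> Prop) (C : V -> Prop) : Prop :=
  forall F v, generates E C F v -> C v.

Lemma closed_in_neighbours_finite {V : Type} (E : V -> V -> Prop) (C : V -> Prop) (y : V) :
  ~ embeds H_fwd E -> closed_set E C -> ~ C y -> finite_set (fun u => C u /\ E u y).
Proof.
  intros NH HC Hy. apply NNPP; intro Hinf. apply NH.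
  apply (embeds_H_fwd_of_rich E _ Hinf). intros F HF HFin Hfin.
  apply Hy, (HC F). repeat split; auto.
  - intros f Hf. apply HFin, Hf.
  - intros f Hf. apply HFin, Hf.
Qed.

Fixpoint closure_stage {V : Type} (E : V -> V -> Prop) (B : V -> Prop) (n : nat) : V -> Prop :=
  match n with
  | 0 => B
  | S m => fun v => closure_stage E B m v \/ exists F, generates E (closure_stage E B m) F v
  end.

Definition closure {V : Type} (E : V -> V -> Prop) (B : V -> Prop) (v : V) : Prop :=
  exists n, closure_stage E B n v.

Section Closure.

Variables (V : Type) (E : V -> V -> Prop).

Lemma closure_stage_le (B : V -> Prop) n m v :
  n <= m -> closure_stage E B n v -> closure_stage E B m v.
Proof. induction 1; simpl; auto. Qed.

Lemma closure_stage_list (B : V -> Prop) (F : list V) :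
  (forall f, In f F -> closure E B f) -> exists n, forall f, In f F -> closure_stage E B n f.
Proof.
  induction F as [|a F IH]; intro HF.
  - exists 0. intros f [].
  - destruct IH as [n Hn]; [intros f Hf; apply HF; right; exact Hf|].
    destruct (HF a (or_introl eq_refl)) as [m Hm].
    exists (max n m). intros f [<-|Hf].
    + apply (closure_stage_le B m); [lia|exact Hm].
    + apply (closure_stage_le B n); [lia|auto].
Qed.

Lemma closure_closed (B : V -> Prop) : closed_set E (closure E B).
Proof.
  intros F v [HF [HFcl [Hfin Hv]]].
  destruct (closure_stage_list B F HFcl) as [n Hn].
  exists (S n). right. exists F. repeat split; auto.
Qed.

Lemma closure_incl (B : V -> Prop) v : B v -> closure E B v.
Proof. intro Bv. exists 0. exact Bv. Qed.

Lemma closure_mono (B B' : V -> Prop) :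
  (forall v, B v -> B' v) -> forall v, closure E B v -> closure E B' v.
Proof.
  intros HB v [n Hn]. exists n. revert v Hn. induction n as [|n IH]; simpl; [exact HB|].
  intros v [Hv|[F [HF [HFn [Hfin HFv]]]]]; [left; auto|right; exists F; repeat split; auto].
Qed.

End Closure.

(** * Tree codes *)

Inductive tree (O : Type) : Type :=
| tleaf : O -> tree O
| tnat : nat -> tree O
| tpair : tree O -> tree O -> tree O.
Arguments tleaf {O}.
Arguments tnat {O}.
Arguments tpair {O}.

Fixpoint leaves_in {O : Type} (P : O -> Prop) (t : tree O) : Prop :=
  match t with
  | tleaf o => P o
  | tnat _ => True
  | tpair a b => leaves_in P a /\ leaves_in P b
  end.

Fixpoint tlist {O : Type} (l : list (tree O)) : tree O :=
  match l with
  | [] => tnat 0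
  | t :: l => tpair t (tlist l)
  end.

Definition tree_coded {V O : Type} (Y : V -> Prop) (P : O -> Prop) : Prop :=
  exists g : V -> tree O, (forall x y, Y x -> Y y -> g x = g y -> x = y) /\
                          (forall x, Y x -> leaves_in P (g x)).

Lemma leaves_in_mono {O : Type} (P Q : O -> Prop) :
  (forall o, P o -> Q o) -> forall t, leaves_in P t -> leaves_in Q t.
Proof. intros HPQ t. induction t; simpl; intuition. Qed.

Lemma leaves_in_tlist {O : Type} (P : O -> Prop) (l : list (tree O)) :
  (forall t, In t l -> leaves_in P t) -> leaves_in P (tlist l).
Proof. induction l; simpl; auto. Qed.

Lemma tlist_inj {O : Type} (l1 l2 : list (tree O)) : tlist l1 = tlist l2 -> l1 = l2.
Proof.
  revert l2. induction l1 as [|a l1 IH]; intros [|b l2]; simpl; intro e; try discriminate; auto.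
  injection e as -> e. f_equal. auto.
Qed.

Lemma map_inj_in {A B : Type} (f : A -> B) (P : A -> Prop) (l1 l2 : list A) :
  (forall x y, P x -> P y -> f x = f y -> x = y) ->
  (forall x, In x l1 -> P x) -> (forall x, In x l2 -> P x) -> map f l1 = map f l2 -> l1 = l2.
Proof.
  intros Hf. revert l2. induction l1 as [|a l1 IH]; intros [|b l2]; simpl; intros H1 H2 e;
    try discriminate; auto.
  injection e as eab e. f_equal; auto.
Qed.

Definition enum_of {V : Type} (P : V -> Prop) : list V :=
  epsilon (inhabits []) (fun L => forall x, P x -> In x L).

Lemma in_enum_of {V : Type} (P : V -> Prop) x : finite_set P -> P x -> In x (enum_of P).
Proof. intro Hfin. apply (epsilon_spec (inhabits []) (fun L => forall x, P x -> In x L) Hfin). Qed.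

Definition index_of {V : Type} (L : list V) (y : V) : nat :=
  epsilon (inhabits 0) (fun k => nth_error L k = Some y).

Lemma index_of_inj {V : Type} (L : list V) y z :
  In y L -> In z L -> index_of L y = index_of L z -> y = z.
Proof.
  intros Hy Hz e.
  assert (Ey := epsilon_spec (inhabits 0) _ (In_nth_error L y Hy)).
  assert (Ez := epsilon_spec (inhabits 0) _ (In_nth_error L z Hz)).
  fold (index_of L y) in Ey. fold (index_of L z) in Ez.
  rewrite e, Ez in Ey. congruence.
Qed.

Section ClosureCode.

Variables (V O : Type) (E : V -> V -> Prop) (B : V -> Prop) (g : V -> tree O).

Definition stage_witness (n : nat) (y : V) : list V :=
  epsilon (inhabits []) (fun F => generates E (closure_stage E B n) F y).

(* A vertex added at stage [m+1] is coded by the codes of a generating list [F]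
   together with its position in an enumeration of the finitely many common
   out-neighbours of [F]. *)
Fixpoint stage_code (n : nat) (y : V) : tree O :=
  match n with
  | 0 => tpair (tnat 0) (g y)
  | S m =>
      if excluded_middle_informative (closure_stage E B m y) then stage_code m y
      else let F := stage_witness m y in
        tpair (tnat (S (index_of (enum_of (common_out E F)) y))) (tlist (map (stage_code m) F))
  end.

Lemma stage_code_succ n y : closure_stage E B n y -> stage_code (S n) y = stage_code n y.
Proof. intro Hy. simpl. destruct (excluded_middle_informative _); [reflexivity|contradiction]. Qed.

Lemma stage_code_stable n m y :
  n <= m -> closure_stage E B n y -> stage_code m y = stage_code n y.
Proof.
  induction 1 as [|m Hnm IH]; intro Hy; [reflexivity|].
  rewrite stage_code_succ; [auto|]. apply (closure_stage_le V E B n); assumption.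
Qed.

Lemma stage_code_shape n y : closure_stage E B n y ->
  (B y /\ stage_code n y = tpair (tnat 0) (g y)) \/
  exists m F, n = S m /\ generates E (closure_stage E B m) F y /\
    stage_code n y = tpair (tnat (S (index_of (enum_of (common_out E F)) y)))
                           (tlist (map (stage_code m) F)).
Proof.
  revert y. induction n as [|m IH]; intros y Hy; [left; auto|].
  destruct (classic (closure_stage E B m y)) as [Hm|Hm].
  - rewrite stage_code_succ by exact Hm.
    destruct (IH y Hm) as [Hbase|[k [F [-> [[HF [HFk [HFfin Hout]]] Hcode]]]]]; [left; exact Hbase|].
    right. exists (S k), F. repeat split; auto.
    + intros f Hf. left. auto.
    + rewrite Hcode. f_equal. f_equal. apply map_ext_in. intros f Hf.
      symmetry. apply stage_code_succ, HFk, Hf.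
  - right. exists m, (stage_witness m y). simpl.
    destruct (excluded_middle_informative _) as [h|_]; [contradiction|].
    split; [reflexivity|split; [|reflexivity]].
    destruct Hy as [Hy|Hgen]; [contradiction|].
    exact (epsilon_spec (inhabits []) _ Hgen).
Qed.

Hypothesis g_inj : forall x y, B x -> B y -> g x = g y -> x = y.

Lemma stage_code_inj n y z :
  closure_stage E B n y -> closure_stage E B n z -> stage_code n y = stage_code n z -> y = z.
Proof.
  revert y z. induction n as [|m IH]; intros y z Hy Hz e.
  - injection e. apply g_inj; assumption.
  - revert e.
    destruct (stage_code_shape (S m) y Hy) as [[By ->]|[m1 [F1 [e1 [[_ [HF1 [Hfin1 Hy1]]] ->]]]]];
    destruct (stage_code_shape (S m) z Hz) as [[Bz ->]|[m2 [F2 [e2 [[_ [HF2 [Hfin2 Hz2]]] ->]]]]];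
    intro e; try discriminate.
    + injection e. apply g_inj; assumption.
    + injection e1 as <-. injection e2 as <-. injection e as eidx eF.
      assert (eF12 : F1 = F2) by (apply (map_inj_in _ _ _ _ IH HF1 HF2), tlist_inj, eF).
      subst F2.
      apply (index_of_inj _ _ _ (in_enum_of _ y Hfin1 Hy1) (in_enum_of _ z Hfin1 Hz2) eidx).
Qed.

Lemma stage_code_leaves (P : O -> Prop) n y :
  (forall x, B x -> leaves_in P (g x)) -> closure_stage E B n y -> leaves_in P (stage_code n y).
Proof.
  intro Hg. revert y. induction n as [|m IH]; intros y Hy.
  - simpl. split; [exact I|apply Hg, Hy].
  - destruct (stage_code_shape (S m) y Hy) as [[By ->]|[m1 [F [e1 [[_ [HF _]] ->]]]]].
    + split; [exact I|apply Hg, By].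
    + injection e1 as <-. split; [exact I|]. apply leaves_in_tlist.
      intros t Ht. apply in_map_iff in Ht as [f [<- Hf]]. apply IH, HF, Hf.
Qed.

End ClosureCode.

Lemma closure_tree_coded {V O : Type} (E : V -> V -> Prop) (B : V -> Prop) (P : O -> Prop) :
  tree_coded B P -> tree_coded (closure E B) P.
Proof.
  intros [g [g_inj g_leaves]].
  set (level := fun y => epsilon (inhabits 0) (fun n => closure_stage E B n y)).
  assert (Hlevel : forall y, closure E B y -> closure_stage E B (level y) y)
    by (intros y Hy; apply (epsilon_spec (inhabits 0) _ Hy)).
  exists (fun y => stage_code V O E B g (level y) y). split.
  - intros x y Hx Hy e.
    set (N := max (level x) (level y)).
    rewrite <- (stage_code_stable V O E B g (level x) N x), <- (stage_code_stable V O E B g (level y) N y)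
      in e by (auto; lia).
    apply (stage_code_inj V O E B g g_inj N); auto.
    + apply (closure_stage_le V E B (level x)); auto; lia.
    + apply (closure_stage_le V E B (level y)); auto; lia.
  - intros y Hy. apply stage_code_leaves; auto.
Qed.

(** * Directed cycles and colourings *)

Lemma last_cons {A : Type} (l : list A) (x d : A) : last (x :: l) d = last l x.
Proof.
  revert x d. induction l as [|y l IH]; intros x d; [reflexivity|].
  change (last (y :: l) d = last (y :: l) x). rewrite !IH. reflexivity.
Qed.

Lemma path_arcs_app {V : Type} (E : V -> V -> Prop) (a : V) (l1 l2 : list V) :
  path_arcs E a (l1 ++ l2) <-> path_arcs E a l1 /\ path_arcs E (last l1 a) l2.
Proof.
  revert a. induction l1 as [|x l1 IH]; intro a; cbn [app path_arcs]; [simpl; tauto|].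
  rewrite IH, last_cons. tauto.
Qed.

Lemma path_transition {V : Type} (E : V -> V -> Prop) (Q : V -> Prop) (a : V) (l : list V) :
  path_arcs E a l -> ~ Q a -> (exists z, In z l /\ Q z) ->
  exists p y, E p y /\ In p (a :: l) /\ In y l /\ ~ Q p /\ Q y.
Proof.
  revert a. induction l as [|y l IH]; intros a Hp Ha [z [Hz Qz]]; [destruct Hz|].
  destruct Hp as [Hay Hp].
  destruct (classic (Q y)) as [Qy|Qy]; [exists a, y; simpl; auto|].
  destruct Hz as [<-|Hz]; [contradiction|].
  destruct (IH y Hp Qy (ex_intro _ z (conj Hz Qz))) as [p [y' [Hpy' [Hp' [Hy' [Qp Qy']]]]]].
  exists p, y'. simpl in *. tauto.
Qed.

Lemma directed_cycle_two {V : Type} (E : V -> V -> Prop) (l : list V) :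
  directed_cycle E l -> exists a b, In a l /\ In b l /\ a <> b.
Proof.
  intros [v0 [[|r rest] [-> [Hne [Hnd _]]]]]; [congruence|].
  exists v0, r. split; [left; auto|split; [right; left; auto|]].
  intros <-. inversion Hnd as [|? ? Hv0]. apply Hv0. left. reflexivity.
Qed.

(* The cycle is [v0 :: rest], closed by the walk [v0, rest, v0]; if [Q v0] we
   start the walk at a vertex of [rest] outside [Q] instead. *)
Lemma directed_cycle_transition {V : Type} (E : V -> V -> Prop) (Q : V -> Prop) (l : list V) :
  directed_cycle E l -> (exists a, In a l /\ Q a) -> (exists b, In b l /\ ~ Q b) ->
  exists p y, E p y /\ In p l /\ In y l /\ ~ Q p /\ Q y.
Proof.
  intros [v0 [rest [-> [_ [_ Hp]]]]] [a [Ha Qa]] [b [Hb Qb]].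
  destruct (classic (Q v0)) as [Q0|Q0].
  - destruct Hb as [<-|Hb]; [contradiction|].
    destruct (in_split b rest) as [r1 [r2 ->]]; [exact Hb|].
    replace ((r1 ++ b :: r2) ++ [v0]) with ((r1 ++ [b]) ++ (r2 ++ [v0])) in Hp
      by (rewrite <- !app_assoc; reflexivity).
    apply path_arcs_app in Hp as [_ Hp]. rewrite last_last in Hp.
    destruct (path_transition E Q b (r2 ++ [v0]) Hp Qb) as [p [y [Hpy [Hp' [Hy [Qp Qy]]]]]].
    { exists v0. rewrite in_app_iff. simpl. auto. }
    exists p, y. simpl in *. rewrite !in_app_iff in *. simpl in *. tauto.
  - destruct (path_transition E Q v0 (rest ++ [v0]) Hp Q0) as [p [y [Hpy [Hp' [Hy [Qp Qy]]]]]].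
    { exists a. rewrite in_app_iff. destruct Ha as [<-|Ha]; [contradiction|auto]. }
    exists p, y. simpl in *. rewrite !in_app_iff in *. simpl in *. tauto.
Qed.

Lemma path_arcs_rev {V : Type} (E : V -> V -> Prop) (a b : V) (l : list V) :
  path_arcs E a (l ++ [b]) -> path_arcs (fun x y => E y x) b (rev l ++ [a]).
Proof.
  revert a. induction l as [|x l IH]; simpl; intros a [Hax Hp]; [split; auto|].
  apply path_arcs_app. rewrite last_last. split; [apply IH, Hp|simpl; auto].
Qed.

Definition colourable {V : Type} (E : V -> V -> Prop) (Y : V -> Prop) : Prop :=
  exists c : V -> nat, forall n, acyclic_set E (fun v => Y v /\ c v = n).

Lemma colourable_sub {V : Type} (E : V -> V -> Prop) (Y Z : V -> Prop) :
  colourable E Y -> (forall v, Z v -> Y v) -> colourable E Z.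
Proof.
  intros [c Hc] HZY. exists c. intros n [l [Hl Hin]]. apply (Hc n). exists l. split; [exact Hl|].
  intros v Hv. destruct (Hin v Hv). auto.
Qed.

Lemma acyclic_set_rev {V : Type} (E : V -> V -> Prop) (A : V -> Prop) :
  acyclic_set (fun x y => E y x) A -> acyclic_set E A.
Proof.
  intros HA [l [[v0 [rest [-> [Hne [Hnd Hp]]]]] Hin]]. apply HA.
  exists (v0 :: rev rest). split.
  - exists v0, (rev rest). repeat split.
    + intro h. apply Hne. rewrite <- (rev_involutive rest), h. reflexivity.
    + apply (Permutation_NoDup (l := v0 :: rest)); [|exact Hnd].
      apply perm_skip, Permutation_rev.
    + apply path_arcs_rev, Hp.
  - intros v [<-|Hv]; apply Hin; [left; reflexivity|right; apply in_rev, Hv].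
Qed.

Fixpoint tree_to_nat {O : Type} (t : tree O) : nat :=
  match t with
  | tleaf _ => 0
  | tnat k => to_nat (0, k)
  | tpair a b => to_nat (S (tree_to_nat a), tree_to_nat b)
  end.

Lemma tree_to_nat_inj {O : Type} (t1 t2 : tree O) :
  leaves_in (fun _ => False) t1 -> leaves_in (fun _ => False) t2 ->
  tree_to_nat t1 = tree_to_nat t2 -> t1 = t2.
Proof.
  revert t2. induction t1 as [o|k|a IHa b IHb]; intros [o'|k'|a' b'] H1 H2 e;
    cbn [leaves_in tree_to_nat] in *; try contradiction; apply to_nat_inj in e;
    [injection e as ->; reflexivity|discriminate|discriminate|].
  injection e as ea eb. destruct H1, H2. f_equal; auto.
Qed.

Lemma colourable_of_tree_coded_leafless {V O : Type} (E : V -> V -> Prop) (Y : V -> Prop) :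
  tree_coded Y (fun _ : O => False) -> colourable E Y.
Proof.
  intros [g [g_inj g_leaves]].
  exists (fun v => tree_to_nat (g v)). intros n [l [Hl Hin]].
  destruct (directed_cycle_two E l Hl) as [a [b [Ha [Hb Hab]]]].
  destruct (Hin a Ha) as [Ya Ca]. destruct (Hin b Hb) as [Yb Cb].
  apply Hab, g_inj, tree_to_nat_inj; auto. congruence.
Qed.

Lemma greedy_colouring {V : Type} (R N : V -> V -> Prop) :
  well_founded R -> (forall x, finite_set (fun u => R u x /\ N u x)) ->
  exists c : V -> nat, forall u x, R u x -> N u x -> c u <> c x.
Proof.
  intros wfR Hfin.
  set (step := fun x (rec : forall u, R u x -> nat) =>
         epsilon (inhabits 0) (fun m => forall u (h : R u x), N u x -> rec u h <> m)).
  set (c := Fix wfR (fun _ => nat) step).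
  assert (Hc : forall x, c x = step x (fun u _ => c u)).
  { intro x. apply (Fix_eq wfR (fun _ => nat) step). intros x' f1 f2 Hf.
    unfold step. replace f2 with f1; [reflexivity|].
    apply functional_extensionality_dep; intro u. apply functional_extensionality_dep; auto. }
  exists c. intros u x Hu Nu. rewrite (Hc x). unfold step.
  set (P := fun m => forall u (h : R u x), N u x -> c u <> m).
  enough (HP : P (epsilon (inhabits 0) P)) by exact (HP u Hu Nu).
  apply epsilon_spec.
  destruct (Hfin x) as [L HL]. exists (S (list_max (map c L))). intros v h Nv e.
  assert (Hle := proj1 (list_max_le (map c L) _) (le_n _)).
  rewrite Forall_forall in Hle. specialize (Hle (c v) (in_map c L v (HL v (conj h Nv)))). lia.
Qed.

Section Layers.

Variables (V O : Type) (E : V -> V -> Prop) (lt : O -> O -> Prop).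
Hypothesis lt_swo : strict_well_order lt.

(* Colour by the pair (colour inside the layer, greedy colour avoiding the
   in-neighbours of smaller rank): an arc entering the top layer of a cycle from
   below changes the greedy colour, so a monochromatic cycle lies in one layer. *)
Lemma colourable_of_layers (Y : V -> Prop) (rank : V -> O) :
  (forall b, colourable E (fun x => Y x /\ rank x = b)) ->
  (forall x, Y x -> finite_set (fun u => Y u /\ E u x /\ lt (rank u) (rank x))) ->
  colourable E Y.
Proof.
  intros Hlayer Hback. destruct lt_swo as [lt_wf [lt_trans lt_total]].
  set (d := fun b => epsilon (inhabits (fun _ : V => 0))
              (fun c => forall n, acyclic_set E (fun v => (Y v /\ rank v = b) /\ c v = n))).
  assert (Hd : forall b n, acyclic_set E (fun v => (Y v /\ rank v = b) /\ d b v = n))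
    by (intro b; apply (epsilon_spec (inhabits (fun _ : V => 0)) _ (Hlayer b))).
  destruct (greedy_colouring (fun u x => lt (rank u) (rank x)) (fun u x => Y u /\ Y x /\ E u x))
    as [c Hc].
  { apply (wf_inverse_image V O lt rank lt_wf). }
  { intro x. destruct (classic (Y x)) as [Yx|Yx].
    - apply (finite_set_sub _ _ (Hback x Yx)). intros u [h [Yu [_ Eux]]]. auto.
    - exists []. intros u [_ [_ [Yx' _]]]. contradiction. }
  exists (fun v => to_nat (d (rank v) v, c v)). intros n [l [Hl Hin]].
  assert (Hcol : forall v, In v l -> Y v /\ (d (rank v) v, c v) = of_nat n).
  { intros v Hv. destruct (Hin v Hv) as [Yv <-]. rewrite cancel_of_to. auto. }
  destruct (directed_cycle_two E l Hl) as [a [_ [Ha _]]].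
  destruct (exists_max_in_list O lt lt_swo rank l) as [x [Hx Hmax]]; [intros ->; destruct Ha|].
  destruct (classic (exists v, In v l /\ rank v <> rank x)) as [[v [Hv Hvx]]|Hsame].
  - destruct (directed_cycle_transition E (fun v => rank v = rank x) l Hl)
      as [p [y [Epy [Hp [Hy [Qp Qy]]]]]]; eauto.
    destruct (Hcol p Hp) as [Yp Cp]. destruct (Hcol y Hy) as [Yy Cy].
    apply (Hc p y).
    + rewrite Qy. destruct (lt_total (rank p) (rank x)) as [h|[h|h]]; [auto|contradiction|].
      destruct (Hmax p Hp h).
    + auto.
    + rewrite <- Cy in Cp. congruence.
  - apply (Hd (rank x) (fst (of_nat n))). exists l. split; [exact Hl|].
    intros v Hv. destruct (Hcol v Hv) as [Yv Cv].
    assert (Rv : rank v = rank x) by (apply NNPP; intro h; apply Hsame; eauto).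
    rewrite Rv in Cv. rewrite <- Cv. auto.
Qed.

End Layers.

(** * The transfinite induction *)

Fixpoint tree_drop {O : Type} (d : O) (t : tree O) : tree O :=
  match t with
  | tleaf o => if excluded_middle_informative (o = d) then tnat 0 else tleaf o
  | tnat k => tnat (S k)
  | tpair a b => tpair (tree_drop d a) (tree_drop d b)
  end.

Lemma tree_drop_inj {O : Type} (d : O) (t1 t2 : tree O) : tree_drop d t1 = tree_drop d t2 -> t1 = t2.
Proof.
  revert t2. induction t1 as [o|k|a IHa b IHb]; intros [o'|k'|a' b']; simpl;
    repeat destruct (excluded_middle_informative _); intro Heq; subst; try reflexivity; try discriminate;
    injection Heq; intros; subst; f_equal; auto.
Qed.

Lemma tree_drop_leaves {O : Type} (P : O -> Prop) (d : O) (t : tree O) :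
  leaves_in P t -> leaves_in (fun o => P o /\ o <> d) (tree_drop d t).
Proof.
  induction t as [o|k|a IHa b IHb]; simpl; [|auto|tauto].
  destruct (excluded_middle_informative (o = d)); simpl; auto.
Qed.

Lemma tree_coded_mono {V O : Type} (Y : V -> Prop) (P Q : O -> Prop) :
  tree_coded Y P -> (forall o, P o -> Q o) -> tree_coded Y Q.
Proof.
  intros [g [g_inj g_leaves]] HPQ. exists g. split; [exact g_inj|].
  intros x Yx. apply (leaves_in_mono P); auto.
Qed.

Lemma tree_coded_drop {V O : Type} (Y : V -> Prop) (P : O -> Prop) (d : O) :
  tree_coded Y P -> tree_coded Y (fun o => P o /\ o <> d).
Proof.
  intros [g [g_inj g_leaves]]. exists (fun v => tree_drop d (g v)). split.
  - intros x y Yx Yy e. apply g_inj, (tree_drop_inj d); assumption.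
  - intros x Yx. apply tree_drop_leaves, g_leaves, Yx.
Qed.

Section Colouring.

Variables (V O : Type) (E : V -> V -> Prop) (lt : O -> O -> Prop).
Hypothesis no_H_fwd : ~ embeds H_fwd E.
Hypothesis lt_swo : strict_well_order lt.

Lemma leaves_below_monotone (t : tree O) : monotone O lt (fun b => leaves_in (fun o => lt o b) t).
Proof.
  intros b b' Hbb'. apply leaves_in_mono. intros o Ho. apply (proj1 (proj2 lt_swo)) with b; assumption.
Qed.

Lemma leaves_below_limit (alpha : O) :
  (forall o, lt o alpha -> exists b, lt o b /\ lt b alpha) -> (exists b, lt b alpha) ->
  forall t, leaves_in (fun o => lt o alpha) t -> exists b, lt b alpha /\ leaves_in (fun o => lt o b) t.
Proof.
  intros Hlim Hne. induction t as [o|k|t1 IH1 t2 IH2]; simpl.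
  - intro Ho. destruct (Hlim o Ho) as [b [h1 h2]]. eauto.
  - intros _. destruct Hne as [b Hb]. eauto.
  - intros [H1 H2]. destruct (IH1 H1) as [b1 [Hb1 L1]], (IH2 H2) as [b2 [Hb2 L2]].
    destruct (monotone_join O lt lt_swo _ _ b1 b2 (leaves_below_monotone t1)
                (leaves_below_monotone t2) L1 L2) as [b [Hb L]].
    exists b. split; [destruct Hb as [-> | ->]; assumption|exact L].
Qed.

(* At a limit [alpha], [M b] is the closure of the vertices coded below [b] and
   [rank x] is the least [b] with [x] in [M b].  The union of the [M c] with
   [c < rank x] is closed, being a chain of closed sets, and misses [x]. *)
Lemma colourable_limit_step (alpha : O) :
  (forall b, lt b alpha -> forall Y, tree_coded Y (fun o => lt o b) -> colourable E Y) ->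
  (forall o, lt o alpha -> exists b, lt o b /\ lt b alpha) -> (exists b, lt b alpha) ->
  forall Y, tree_coded Y (fun o => lt o alpha) -> colourable E Y.
Proof.
  intros IH Hlim [b0 Hb0] Y [g [g_inj g_leaves]].
  destruct lt_swo as [_ [lt_trans _]].
  set (M := fun b => closure E (fun x => Y x /\ leaves_in (fun o => lt o b) (g x))).
  assert (M_col : forall b, lt b alpha -> colourable E (M b)).
  { intros b Hb. apply (IH b Hb), closure_tree_coded. exists g. split.
    - intros x y [Yx _] [Yy _]. auto.
    - intros x [_ Hx]. exact Hx. }
  assert (M_mono : forall v, monotone O lt (fun b => M b v)).
  { intros v b b' Hbb'. apply closure_mono. intros x [Yx Hx].
    split; [exact Yx|apply (leaves_below_monotone _ b); assumption]. }
  set (rank := fun x => epsilon (inhabits alpha)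
                 (fun b => lt b alpha /\ M b x /\ forall c, lt c b -> ~ M c x)).
  assert (Hrank : forall x, Y x ->
            lt (rank x) alpha /\ M (rank x) x /\ forall c, lt c (rank x) -> ~ M c x).
  { intros x Yx. apply (epsilon_spec (inhabits alpha)
                   (fun b => lt b alpha /\ M b x /\ forall c, lt c b -> ~ M c x)).
    destruct (leaves_below_limit alpha Hlim (ex_intro _ b0 Hb0) (g x) (g_leaves x Yx)) as [b [Hb Lb]].
    destruct (exists_minimal O lt lt_swo (fun b => lt b alpha /\ M b x)) as [z [[Hz Mz] Hmin]].
    { exists b. split; [exact Hb|apply closure_incl; auto]. }
    exists z. repeat split; auto. intros c Hc Mc. apply (Hmin c Hc). eauto. }
  apply (colourable_of_layers V O E lt lt_swo Y rank).
  - intro b. destruct (classic (lt b alpha)) as [Hb|Hb].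
    + apply (colourable_sub _ _ _ (M_col b Hb)). intros x [Yx <-]. apply Hrank, Yx.
    + apply (colourable_sub _ _ _ (M_col b0 Hb0)). intros x [Yx <-]. destruct Hb. apply Hrank, Yx.
  - intros x Yx.
    set (C := fun v => exists c, lt c (rank x) /\ M c v).
    assert (C_closed : closed_set E C).
    { intros F v [HF [HFC [Hfin Hv]]].
      destruct (monotone_family_bound O lt lt_swo M (rank x) M_mono F HF HFC) as [c [Hc HcF]].
      exists c. split; [exact Hc|]. apply (closure_closed V E _ F v). repeat split; auto. }
    assert (x_notin_C : ~ C x) by (intros [c [Hc Mc]]; exact (proj2 (proj2 (Hrank x Yx)) c Hc Mc)).
    apply (finite_set_sub _ _ (closed_in_neighbours_finite E C x no_H_fwd C_closed x_notin_C)).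
    intros u [Yu [Eux Hu]]. split; [|exact Eux]. exists (rank u). split; [exact Hu|apply Hrank, Yu].
Qed.

(* Transfinite induction on [alpha]: with no labels below [alpha] the codes are
   natural numbers; a largest label can be dropped; otherwise [alpha] is a limit. *)
Lemma colourable_of_tree_coded (alpha : O) :
  forall Y, tree_coded Y (fun o => lt o alpha) -> colourable E Y.
Proof.
  destruct lt_swo as [lt_wf [lt_trans lt_total]].
  induction (lt_wf alpha) as [alpha _ IH]. intros Y HY.
  destruct (classic (exists o, lt o alpha)) as [Hne|Hempty].
  2: { apply (colourable_of_tree_coded_leafless (O := O)), (tree_coded_mono _ _ _ HY).
       intros o Ho. apply Hempty. eauto. }
  destruct (classic (exists d, lt d alpha /\ forall o, lt o alpha -> o = d \/ lt o d))
    as [[d [Hd Hmax]]|Hlim].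
  - apply (IH d Hd), (tree_coded_mono _ _ _ (tree_coded_drop _ _ d HY)).
    intros o [Ho Hod]. destruct (Hmax o Ho); [contradiction|assumption].
  - apply (colourable_limit_step alpha IH); [|exact Hne|exact HY].
    intros o Ho. apply NNPP; intro Hno. apply Hlim. exists o. split; [exact Ho|].
    intros o' Ho'. destruct (lt_total o' o) as [h|[h|h]]; auto. destruct Hno; eauto.
Qed.

End Colouring.

Lemma dichromatic_le_omega_of_no_H_fwd {V : Type} (E : V -> V -> Prop) :
  ~ embeds H_fwd E -> dichromatic_le_omega E.
Proof.
  intro no_H_fwd. destruct (strict_well_order_exists V) as [lt lt_swo].
  destruct (colourable_of_tree_coded V (option V) E (lt_top lt) no_H_fwd
              (strict_well_order_lt_top lt lt_swo) None (fun _ => True)) as [c Hc].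
  { exists (fun v => tleaf (Some v)). split; [intros x y _ _ e; injection e; auto|intros x _; exact I]. }
  exists (fun n v => c v = n). split.
  - intros n [l [Hl Hin]]. apply (Hc n). exists l. split; [exact Hl|]. intros v Hv. split; auto.
  - intro v. exists (c v). reflexivity.
Qed.

Lemma dichromatic_le_omega_rev {V : Type} (E : V -> V -> Prop) :
  dichromatic_le_omega (fun x y => E y x) -> dichromatic_le_omega E.
Proof. intros [A [HA Hcov]]. exists A. split; [intro n; apply acyclic_set_rev, HA|exact Hcov]. Qed.

Lemma embeds_H_bwd_of_rev {V : Type} (E : V -> V -> Prop) :
  embeds H_fwd (fun x y => E y x) -> embeds H_bwd E.
Proof.
  intros [f [f_inj f_arcs]]. exists f. split; [exact f_inj|].
  intros x y [Hx [Hy Hxy]]. apply (f_arcs y x). repeat split; assumption.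
Qed.

Theorem proposition3p4 (V : Type) (E : V -> V -> Prop) :
  oriented E -> dichromatic_gt_omega E ->
  embeds H_fwd E /\ embeds H_bwd E.
Proof.
  intros _ Hgt. split.
  - apply NNPP. intro no_H_fwd. apply Hgt, dichromatic_le_omega_of_no_H_fwd, no_H_fwd.
  - apply NNPP. intro no_H_bwd. apply Hgt, dichromatic_le_omega_rev, dichromatic_le_omega_of_no_H_fwd.
    intro H. apply no_H_bwd, embeds_H_bwd_of_rev, H.
Qed.
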